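(* Let $D\in\mathcal{U}(n,s_1\cdots s_{p+q})$ (first $p$ factors qualitative, last $q$ quantitative), let $N=\prod_{k=1}^{p+q}s_k$ and $y=y(D)$. Then $$\mathrm{QQD}^2(D)=-\prod_{k=1}^{p}\left(\frac{5s_k+1}{4s_k}\right)\left(\frac43\right)^q+\frac{1}{n^2}y^TAy,$$ where $A=A_1\otimes A_2\otimes\cdots\otimes A_{p+q}$ ($\otimes$ the Kronecker product), $A_k=(t^k_{ij})_{i,j=1}^{s_k}$, with $t^k_{ij}=(3/2)^{\delta_{ij}}(5/4)^{1-\delta_{ij}}$ for $k=1,\dots,p$ and $t^k_{ij}=\frac32-\frac{|i-j|(s_k-|i-j|)}{s_k^2}$ for $k=p+1,\dots,p+q$.
   Context: A U-type design in $\mathcal{U}(n,s_1\cdots s_{p+q})$ is an $n\times(p+q)$ matrix whose $k$th column takes each value in $\{0,\dots,s_k-1\}$ equally often; the first $p$ columns are qualitative, the last $q$ quantitative. For quantitative columns a level $x$ is transformed to $(2x+1)/(2s_k)\in[0,1]$. Let $\chi=\prod_k\chi_k$, $\chi_k=\{0,\dots,s_k-1\}$ for $k\le p$, $\chi_k=[0,1]$ for $k>p$, and $F$ the uniform distribution on $\chi$. Kernel: $\mathcal{K}(t,z)=\prod_k\mathcal{K}_k(t_k,z_k)$ with $\mathcal{K}_k=(3/2)^{\delta_{t_kz_k}}(5/4)^{1-\delta_{t_kz_k}}$ for $k\le p$ ($\delta$ the Kronecker delta) and $\mathcal{K}_k=\frac32-|t_k-z_k|+|t_k-z_k|^2$ for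 $k>p$. For $D$ with (transformed) rows $x_1,\dots,x_n$, $\mathrm{QQD}^2(D)=\int_{\chi^2}\mathcal{K}\,dF\,dF-\frac2n\sum_i\int_\chi\mathcal{K}(t,x_i)dF(t)+\frac1{n^2}\sum_{i,j}\mathcal{K}(x_i,x_j)$. The vector $y(D)$ is the $N$-dimensional column vector whose entries $n(i_1,\dots,i_{p+q})$, arranged in lexicographic order of $(i_1,\dots,i_{p+q})$, are the numbers of runs of $D$ at level combination $(i_1,\dots,i_{p+q})$. *)

From HB Require Import structures.
From mathcomp Require Import all_boot all_order all_algebra.
From mathcomp Require Import all_classical all_reals all_analysis.
From mathcomp Require Import mxtens.
Set Implicit Arguments. Unset Strict Implicit. Unset Printing Implicit Defensive.
Import Order.TTheory GRing.Theory Num.Theory.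
Import numFieldNormedType.Exports.
Local Open Scope classical_set_scope.
Local Open Scope ring_scope.

(* s : seq nat lists s_1,...,s_{p+q} (0-based: s_k = nth 0 s k). *)
Definition sk (s : seq nat) (k : nat) : nat := nth 0%N s k.

Definition Utype (n m : nat) (s : seq nat) (D : 'M[nat]_(n, m)) : Prop :=
  size s = m /\
  (forall (i : 'I_n) (k : 'I_m), (D i k < sk s k)%N) /\
  (forall (k : 'I_m) (a b : nat), (a < sk s k)%N -> (b < sk s k)%N ->
     #|[set i : 'I_n | D i k == a]| = #|[set i : 'I_n | D i k == b]|).

Section QQD.
Variable R : realType.
Variables (p q : nat) (s : seq nat).

(* one-dimensional kernels K_k (k is 0-based: k < p qualitative) *)
Definition Kk (k : nat) (a b : R) : R :=
  if (k < p)%N then (3/2) ^+ (a == b) * (5/4) ^+ (1 - (a == b))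
  else 3/2 - `|a - b| + `|a - b| ^+ 2.

(* points of chi are represented as functions nat -> R (coordinates 0..p+q-1) *)
Definition Kern (t z : nat -> R) : R := \prod_(k < p + q) Kk k (t k) (z k).

(* integration of a function of one coordinate w.r.t. the uniform
   distribution on chi_k *)
Definition int1 (k : nat) (g : R -> R) : R :=
  if (k < p)%N then (sk s k)%:R^-1 * \sum_(a < sk s k) g a%:R
  else (\int[lebesgue_measure]_(x in `[0, 1]) g x)%R.

(* integral over chi = chi_0 x ... x chi_{m-1} w.r.t. the product uniform
   distribution F, computed coordinate by coordinate (Fubini). *)
Fixpoint intF (m : nat) (f : (nat -> R) -> R) : R :=
  match m with
  | 0 => f (fun _ => 0)
  | m'.+1 => int1 m' (fun x =>
               intF m' (fun t => f (fun j => if j == m' then x else t j)))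
  end.

Definition lvl (n : nat) (D : 'M[nat]_(n, p + q)) (r : 'I_n) (k : nat) : nat :=
  nth 0%N [seq D r j | j <- enum 'I_(p + q)] k.

Definition xrow (n : nat) (D : 'M[nat]_(n, p + q)) (r : 'I_n) : nat -> R :=
  fun k => if (k < p)%N then (lvl D r k)%:R
           else (2 * lvl D r k + 1)%:R / (2 * sk s k)%:R.

Definition QQD2 (n : nat) (D : 'M[nat]_(n, p + q)) : R :=
  intF (p + q) (fun t => intF (p + q) (fun z => Kern t z))
  - 2 / n%:R * \sum_(i < n) intF (p + q) (fun t => Kern t (xrow D i))
  + n%:R ^- 2 * \sum_(i < n) \sum_(j < n) Kern (xrow D i) (xrow D j).

Fixpoint prodl (l : seq nat) : nat :=
  match l with [::] => 1%N | a :: l' => (a * prodl l')%N end.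

Fixpoint lexidx (l c : seq nat) : nat :=
  match l, c with
  | a :: l', x :: c' => (x * prodl l' + lexidx l' c')%N
  | _, _ => 0%N
  end.

(* y(D): number of runs at each level combination, lexicographic order *)
Definition yvec (n : nat) (D : 'M[nat]_(n, p + q)) : 'cV[R]_(prodl s) :=
  \col_(i < prodl s)
    #|[set r : 'I_n | lexidx s [seq D r j | j <- enum 'I_(p + q)] == i]|%:R.

(* entries t^k_{ij} (0-based indices; only |i-j| and delta_ij matter) *)
Definition tk (k sz i j : nat) : R :=
  if (k < p)%N then (3/2) ^+ (i == j) * (5/4) ^+ (1 - (i == j))
  else 3/2 - (`|(i%:Z - j%:Z)%R|%N * (sz - `|(i%:Z - j%:Z)%R|%N))%:R / (sz ^ 2)%:R.

Definition Ak (k sz : nat) : 'M[R]_sz := \matrix_(i < sz, j < sz) tk k sz i j.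

Fixpoint kronA (k : nat) (l : seq nat) : 'M[R]_(prodl l) :=
  match l return 'M[R]_(prodl l) with
  | [::] => 1%:M
  | a :: l' => tensmx (Ak k a) (kronA k.+1 l')
  end.

Definition Amx : 'M[R]_(prodl s) := kronA 0 s.

End QQD.

From Pilot Require Import Defs.
From HB Require Import structures.
From mathcomp Require Import all_boot all_order all_algebra.
From mathcomp Require Import all_classical all_reals all_analysis.
From mathcomp Require Import mxtens ring zify.
Set Implicit Arguments. Unset Strict Implicit. Unset Printing Implicit Defensive.
Import Order.TTheory GRing.Theory Num.Theory.
Import numFieldNormedType.Exports.
Local Open Scope classical_set_scope.
Local Open Scope ring_scope.

(* Each one-dimensional kernel K_k(a, .) has the same mean c_k over chi_k for
   every a in chi_k: c_k = (5 s_k + 1) / (4 s_k) for a qualitative factor and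
   4/3 for a quantitative one.  Integrating the product kernel one coordinate
   at a time, the double integral and every single integral of QQD^2 are thus
   equal to C = c_1 ... c_(p+q), and the first two terms add up to -C.  In the
   last term, K(x_i, x_j) is the entry of A indexed by the level combinations
   of the runs i and j: two quantitative levels l, l' are mapped to points at
   distance d / s_k with d = |l - l'|, and 3/2 - d/s + (d/s)^2 equals
   3/2 - d (s - d) / s^2.  Grouping the runs by level combination turns the
   double sum over runs into y^T A y. *)

Section QuantitativeKernelMean.
Variable R : realType.
Local Notation mu := (@lebesgue_measure R).

Lemma Rintegral_deriv_poly (F : {poly R}) (u v : R) : u <= v ->
  \int[mu]_(x in `[u, v]) (F^`()).[x] = F.[v] - F.[u].
Proof.
rewrite le_eqVlt => /predU1P[<-|uv].
  by rewrite set_itv1 Rintegral_set1 subrr.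
rewrite /Rintegral (@continuous_FTC2 _ _ (horner F)) //.
- by apply: continuous_in_subspaceT => x _; exact: continuous_horner.
- split.
  + by move=> x _; exact: derivable_horner.
  + by apply: cvg_at_right_filter; exact: continuous_horner.
  + by apply: cvg_at_left_filter; exact: continuous_horner.
- by move=> x _; rewrite -derivE.
Qed.

Lemma Rintegral_quadratic (a b c u v : R) : u <= v ->
  \int[mu]_(x in `[u, v]) (a + b * x + c * x ^+ 2) =
  (a * v + b / 2 * v ^+ 2 + c / 3 * v ^+ 3) -
  (a * u + b / 2 * u ^+ 2 + c / 3 * u ^+ 3).
Proof.
move=> uv; pose F : {poly R} := a *: 'X + (b / 2) *: 'X^2 + (c / 3) *: 'X^3.
have -> : (fun x => a + b * x + c * x ^+ 2) = horner F^`().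
  apply/funext => x; rewrite /F !(derivD, derivZ, derivXn, derivX) !hornerE /=.
  by field.
by rewrite Rintegral_deriv_poly // /F !hornerE.
Qed.

Lemma continuous_quant_kernel (c b : R) :
  continuous (fun x : R => c * (3/2 - `|b - x| + `|b - x| ^+ 2)).
Proof.
move=> x.
have dist_cvg : (fun y : R => `|b - y|) @ x --> `|b - x|.
  by apply: cvg_norm; apply: cvgB; [exact: cvg_cst|exact: cvg_id].
apply: cvgM; first exact: cvg_cst.
apply: cvgD; first by apply: cvgB; [exact: cvg_cst|exact: dist_cvg].
by rewrite expr2; apply: cvgM; exact: dist_cvg.
Qed.

Lemma Rintegral_quant_kernel (c b : R) : 0 <= b <= 1 ->
  \int[mu]_(x in `[0, 1]) (c * (3/2 - `|b - x| + `|b - x| ^+ 2)) = c * (4 / 3).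
Proof.
case/andP=> b_ge0 b_le1.
pose f x := c * (3/2 - `|b - x| + `|b - x| ^+ 2).
have f_int : mu.-integrable `[0, 1] (EFin \o f).
  apply: continuous_compact_integrable; first exact: segment_compact.
  by apply: continuous_in_subspaceT => x _; exact: continuous_quant_kernel.
have := @Rintegral_itvB R f (BLeft 0) (BRight 1) b f_int.
rewrite !bnd_simp => /(_ b_ge0 b_le1) /eqP; rewrite subr_eq => /eqP ->.
rewrite Rintegral_itv_obnd_cbnd; last first.
  by apply: integrableS f_int => //; apply: subset_itvr; rewrite bnd_simp.
have -> : \int[mu]_(x in `[0, b]) f x =
    \int[mu]_(x in `[0, b]) (c * (3/2 - b + b ^+ 2) + c * (1 - 2 * b) * x + c * x ^+ 2).
  apply: eq_Rintegral => x; rewrite inE /= in_itv /= => /andP[_ xb].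
  by rewrite /f ger0_norm ?subr_ge0 //; ring.
have -> : \int[mu]_(x in `[b, 1]) f x =
    \int[mu]_(x in `[b, 1]) (c * (3/2 + b + b ^+ 2) + c * (- 1 - 2 * b) * x + c * x ^+ 2).
  apply: eq_Rintegral => x; rewrite inE /= in_itv /= => /andP[bx _].
  by rewrite /f ler0_norm ?subr_le0 //; ring.
by rewrite !Rintegral_quadratic //; field.
Qed.

End QuantitativeKernelMean.

Section IteratedIntegral.
Variables (R : realType) (p : nat) (s : seq nat).

Definition in_chi (k : nat) (x : R) : Prop :=
  if (k < p)%N then exists2 l, (l < sk s k)%N & x = l%:R else 0 <= x <= 1.

Lemma eq_int1 k (g g' : R -> R) : (forall x, in_chi k x -> g x = g' x) ->
  int1 p s k g = int1 p s k g'.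
Proof.
rewrite /int1 /in_chi; case: ifP => _ gg'.
  by congr (_ * _); apply: eq_bigr => l _; apply: gg'; exists l.
by apply: eq_Rintegral => x; rewrite inE /= in_itv /=; exact: gg'.
Qed.

Lemma eq_intF m (f f' : (nat -> R) -> R) :
  (forall t, (forall k, (k < m)%N -> in_chi k (t k)) -> f t = f' t) ->
  intF p s m f = intF p s m f'.
Proof.
elim: m f f' => [|m IHm] f f' ff' /=; first exact: ff'.
apply: eq_int1 => x x_chi; apply: IHm => t t_chi; apply: ff' => k.
rewrite ltnS leq_eqVlt => /predU1P[->|km]; first by rewrite eqxx.
by rewrite ltn_eqF //; exact: t_chi.
Qed.

Lemma int1_cst k (c : R) : ((k < p)%N -> (0 < sk s k)%N) ->
  int1 p s k (fun=> c) = c.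
Proof.
rewrite /int1; case: ifP => [kp /(_ isT) sk_gt0|_ _].
  rewrite sumr_const card_ord -[c *+ _]mulr_natl mulrA mulVf ?mul1r //.
  by rewrite pnatr_eq0 -lt0n.
rewrite (@Rintegral_cst _ _ R (@lebesgue_measure R) `[0, 1]%classic) //.
have -> : fine (lebesgue_measure (`[0, 1]%classic : set R)) = 1.
  by rewrite lebesgue_measure_itv /= lte_fin ltr01 oppr0 adde0.
by rewrite mulr1.
Qed.

Lemma intF_cst m (c : R) : (forall k, (k < m)%N -> (k < p)%N -> (0 < sk s k)%N) ->
  intF p s m (fun=> c) = c.
Proof.
elim: m => [|m IHm] //= sk_gt0.
rewrite IHm => [|k km]; last exact/sk_gt0/ltnW.
exact/int1_cst/sk_gt0.
Qed.

(* The factor c collects the values of the coordinates already integrated. *)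
Lemma intF_scaled_prod m (c : R) (g : nat -> R -> R) (I : nat -> R) :
  (forall k, (k < m)%N -> forall c', int1 p s k (fun x => c' * g k x) = c' * I k) ->
  intF p s m (fun t => c * \prod_(k < m) g k (t k)) = c * \prod_(k < m) I k.
Proof.
elim: m c => [|m IHm] c gI /=; first by rewrite !big_ord0.
have split_last x :
    (fun t : nat -> R => c * \prod_(k < m.+1) g k (if k == m :> nat then x else t k))
    = (fun t : nat -> R => c * g m x * \prod_(k < m) g k (t k)).
  apply/funext => t; rewrite big_ord_recr /= eqxx mulrAC -mulrA.
  by congr (_ * (_ * _)); apply: eq_bigr => k _; rewrite ltn_eqF.
transitivity (int1 p s m (fun x => c * \prod_(k < m) I k * g m x)).
  congr int1; apply/funext => x; rewrite split_last IHm; first by rewrite mulrAC.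
  by move=> k km; exact/gI/ltnW.
by rewrite gI // big_ord_recr mulrA.
Qed.

Lemma intF_prod m (g : nat -> R -> R) (I : nat -> R) :
  (forall k, (k < m)%N -> forall c, int1 p s k (fun x => c * g k x) = c * I k) ->
  intF p s m (fun t => \prod_(k < m) g k (t k)) = \prod_(k < m) I k.
Proof.
move=> gI; rewrite -[RHS]mul1r -(intF_scaled_prod 1 gI).
by congr intF; apply/funext => t; rewrite mul1r.
Qed.

End IteratedIntegral.

Section KernelMean.
Variables (R : realType) (p : nat) (s : seq nat).

Definition Kk_mean (k : nat) : R :=
  if (k < p)%N then (5 * sk s k + 1)%:R / (4 * sk s k)%:R else 4 / 3.

Lemma KkC k (a b : R) : Kk p k a b = Kk p k b a.
Proof. by rewrite /Kk eq_sym distrC. Qed.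

Lemma KernC q (t z : nat -> R) : Kern p q t z = Kern p q z t.
Proof. by apply: eq_bigr => k _; exact: KkC. Qed.

Lemma int1_Kk k (a c : R) : in_chi p s k a ->
  int1 p s k (fun x => c * Kk p k a x) = c * Kk_mean k.
Proof.
rewrite /in_chi /int1 /Kk_mean /Kk; case: ifP => [_ [l lS ->]|_ a01]; last first.
  exact: Rintegral_quant_kernel.
set S := sk s k.
have S_neq0 : S%:R != 0 :> R by rewrite pnatr_eq0 -lt0n (leq_ltn_trans _ lS).
have Kl i : c * ((3/2) ^+ (l%:R == i%:R :> R) * (5/4) ^+ (1 - (l%:R == i%:R :> R)))
    = c * (5/4) + c * ((l == i)%:R / 4).
  by rewrite eqr_nat; case: eqP => _ /=; rewrite ?expr1 ?expr0; field.
under eq_bigr => i _ do rewrite Kl.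
rewrite big_split /= sumr_const card_ord -mulr_sumr -mulr_suml.
have -> : \sum_(i < S) ((l == i)%:R : R) = 1.
  rewrite (bigD1 (Ordinal lS)) //= eqxx big1 ?addr0 // => i /eqP il.
  by case: eqP => // li; case: il; exact: val_inj.
by rewrite -mulr_natr natrD !natrM; field.
Qed.

Lemma intF_Kern q (t : nat -> R) :
  (forall k, (k < p + q)%N -> in_chi p s k (t k)) ->
  intF p s (p + q) (Kern p q t) = \prod_(k < p + q) Kk_mean k.
Proof.
move=> t_chi; apply: (intF_prod (g := fun k => Kk p k (t k))) => k kpq c.
exact: int1_Kk (t_chi k kpq).
Qed.

Lemma prod_Kk_mean q :
  \prod_(k < p + q) Kk_mean k =
  \prod_(k < p) ((5 * sk s k + 1)%:R / (4 * sk s k)%:R) * (4 / 3) ^+ q.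
Proof.
rewrite big_split_ord /=; congr (_ * _).
  by apply: eq_bigr => k _; rewrite /Kk_mean ltn_ord.
rewrite (eq_bigr (fun=> 4 / 3)) ?prodr_const ?card_ord // => k _.
by rewrite /Kk_mean ltnNge leq_addr.
Qed.

End KernelMean.

Section KroneckerEntries.
Variables (R : realType) (p : nat).

Lemma lexidx_lt (l c : seq nat) : size c = size l ->
  (forall j, (j < size l)%N -> (nth 0 c j < nth 0 l j)%N) ->
  (lexidx l c < prodl l)%N.
Proof.
elim: l c => [|a l IHl] [|x c] //= [size_c] c_lt.
have x_lt : (x < a)%N by exact: (c_lt 0%N).
have idx_lt : (lexidx l c < prodl l)%N by apply: IHl => // j; exact: (c_lt j.+1).
apply: (@leq_trans (x * prodl l + prodl l)); first by rewrite ltn_add2l.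
by rewrite addnC -mulSn leq_mul2r x_lt orbT.
Qed.

Lemma kronA_lexidx (l : seq nat) k (c c' : seq nat) (i j : 'I_(prodl l)) :
  size c = size l -> size c' = size l ->
  (forall m, (m < size l)%N -> (nth 0 c m < nth 0 l m)%N) ->
  (forall m, (m < size l)%N -> (nth 0 c' m < nth 0 l m)%N) ->
  val i = lexidx l c -> val j = lexidx l c' ->
  kronA R p k l i j =
  \prod_(m < size l) tk R p (k + m) (nth 0 l m) (nth 0 c m) (nth 0 c' m).
Proof.
elim: l k c c' i j => [|a l IHl] k c c' i j.
  by move=> *; rewrite big_ord0 mxE (ord1 i) (ord1 j).
case: c c' => [|x c] [|x' c'] //= [size_c] [size_c'] c_lt c'_lt i_idx j_idx.
have x_lt : (x < a)%N by exact: (c_lt 0%N).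
have x'_lt : (x' < a)%N by exact: (c'_lt 0%N).
have idx_lt : (lexidx l c < prodl l)%N.
  by apply: lexidx_lt => // m; exact: (c_lt m.+1).
have idx'_lt : (lexidx l c' < prodl l)%N.
  by apply: lexidx_lt => // m; exact: (c'_lt m.+1).
have -> : i = mxtens_index (Ordinal x_lt, Ordinal idx_lt) by apply: val_inj.
have -> : j = mxtens_index (Ordinal x'_lt, Ordinal idx'_lt) by apply: val_inj.
rewrite tensmxE mxE big_ord_recl /= addn0; congr (_ * _).
rewrite (IHl k.+1 c c') //.
- by apply: eq_bigr => m _; rewrite addSnnS.
- by move=> m; exact: (c_lt m.+1).
- by move=> m; exact: (c'_lt m.+1).
Qed.

End KroneckerEntries.

Section LevelKernel.
Variables (R : realType) (p : nat) (s : seq nat).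

(* [Defs.xrow s D r k] is convertible to [xlevel k (lvl D r k)]. *)
Definition xlevel (k l : nat) : R :=
  if (k < p)%N then l%:R else (2 * l + 1)%:R / (2 * sk s k)%:R.

Lemma tk_Kk k l l' : (l < sk s k)%N -> (l' < sk s k)%N ->
  tk R p k (sk s k) l l' = Kk p k (xlevel k l) (xlevel k l').
Proof.
move=> l_lt l'_lt; rewrite /tk /Kk /xlevel; case: ifP => _; first by rewrite eqr_nat.
set S := sk s k; set d := `|(l%:Z - l'%:Z)%R|%N.
have S_neq0 : S%:R != 0 :> R by rewrite pnatr_eq0 -lt0n (leq_ltn_trans _ l_lt).
have d_le : (d <= S)%N by rewrite /d; lia.
have dist_xlevel : `|(2 * l + 1)%:R / (2 * S)%:R - (2 * l' + 1)%:R / (2 * S)%:R|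
    = d%:R / S%:R :> R.
  have -> : (2 * l + 1)%:R / (2 * S)%:R - (2 * l' + 1)%:R / (2 * S)%:R
      = (l%:R - l'%:R) / S%:R :> R.
    rewrite !natrD !addr0; field.
    by apply/andP; split; [exact: S_neq0|rewrite -mulr2n mulrn_eq0].
  by rewrite normrM normfV normr_nat /d natr_absz intr_norm intrB.
by rewrite dist_xlevel natrM natrB // natrX; field.
Qed.

Lemma xlevel_in_chi k l : (l < sk s k)%N -> in_chi p s k (xlevel k l).
Proof.
move=> l_lt; rewrite /in_chi /xlevel; case: (k < p)%N; first by exists l.
have S2_gt0 : (0 : R) < (2 * sk s k)%:R by rewrite ltr0n muln_gt0 (leq_ltn_trans _ l_lt).
by rewrite divr_ge0 //= ler_pdivrMr // mul1r ler_nat addn1 ltn_mul2l /= l_lt.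
Qed.

End LevelKernel.

Section CountingVector.
Variables (R : pzRingType) (n N : nat) (f : 'I_n -> 'I_N).

Definition count_col : 'cV[R]_N := \col_v #|[set r | f r == v]|%:R.

Lemma count_colE v : count_col v ord0 = \sum_(r < n) (f r == v)%:R.
Proof.
rewrite mxE -sum1_card natr_sum big_mkcond /=.
apply: eq_bigr => r _; case: (boolP (f r == v)) => [fv|fNv].
  by rewrite mem_set.
by rewrite memNset //; exact/negP.
Qed.

Lemma sum_count_col_mull (G : 'I_N -> R) :
  \sum_v count_col v ord0 * G v = \sum_(r < n) G (f r).
Proof.
under eq_bigr do rewrite count_colE mulr_suml.
rewrite exchange_big; apply: eq_bigr => r _.
rewrite (bigD1 (f r)) //= eqxx mul1r big1 ?addr0 // => v.
by rewrite eq_sym => /negbTE ->; rewrite mul0r.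
Qed.

Lemma sum_count_col_mulr (G : 'I_N -> R) :
  \sum_v G v * count_col v ord0 = \sum_(r < n) G (f r).
Proof.
rewrite -sum_count_col_mull; apply: eq_bigr => v _.
by rewrite mxE; exact: commr_nat.
Qed.

Lemma count_col_quad (A : 'M[R]_N) :
  (count_col^T *m A *m count_col) ord0 ord0 = \sum_(i < n) \sum_(j < n) A (f i) (f j).
Proof.
rewrite mxE sum_count_col_mulr [RHS]exchange_big; apply: eq_bigr => j _.
rewrite -(sum_count_col_mull (A^~ (f j))) mxE.
by apply: eq_bigr => k _; rewrite mxE.
Qed.

End CountingVector.

Section Design.
Variables (R : realType) (n p q : nat) (s : seq nat) (D : 'M[nat]_(n, p + q)).
Hypotheses (size_s : size s = (p + q)%N) (D_lt : forall i k, (D i k < sk s k)%N).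

Definition run_levels (r : 'I_n) : seq nat := [seq D r j | j <- enum 'I_(p + q)].

Lemma size_run_levels r : size (run_levels r) = size s.
Proof. by rewrite size_map size_enum_ord size_s. Qed.

Lemma lvl_lt r k : (k < p + q)%N -> (lvl D r k < sk s k)%N.
Proof.
move=> kpq; rewrite /lvl (nth_map (Ordinal kpq)) ?size_enum_ord //.
have -> : nth (Ordinal kpq) (enum 'I_(p + q)) k = Ordinal kpq.
  by apply: val_inj; rewrite /= nth_enum_ord.
exact: D_lt.
Qed.

Lemma run_levels_lt r m : (m < size s)%N -> (nth 0 (run_levels r) m < nth 0 s m)%N.
Proof. by rewrite size_s; exact: lvl_lt. Qed.

Definition run_index (r : 'I_n) : 'I_(prodl s) :=
  Ordinal (lexidx_lt (size_run_levels r) (run_levels_lt r)).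

Lemma yvecE : yvec R s D = count_col R run_index.
Proof. by []. Qed.

Lemma Amx_run_index r r' :
  Amx R p s (run_index r) (run_index r') =
  Kern p q (Defs.xrow R s D r) (Defs.xrow R s D r').
Proof.
rewrite /Amx (kronA_lexidx _ _ _ (size_run_levels r) (size_run_levels r')
  (run_levels_lt r) (run_levels_lt r')) // size_s.
apply: eq_bigr => k _; rewrite add0n.
exact: tk_Kk (lvl_lt r (ltn_ord k)) (lvl_lt r' (ltn_ord k)).
Qed.

Lemma yvec_quad :
  ((yvec R s D)^T *m Amx R p s *m yvec R s D) ord0 ord0 =
  \sum_(i < n) \sum_(j < n) Kern p q (Defs.xrow R s D i) (Defs.xrow R s D j).
Proof.
rewrite yvecE count_col_quad.
by apply: eq_bigr => i _; apply: eq_bigr => j _; exact: Amx_run_index.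
Qed.

Lemma intF_Kern_xrow r :
  intF p s (p + q) (fun t => Kern p q t (Defs.xrow R s D r)) =
  \prod_(k < p + q) Kk_mean R p s k.
Proof.
have -> : (fun t => Kern p q t (Defs.xrow R s D r)) = Kern p q (Defs.xrow R s D r).
  by apply/funext => t; exact: KernC.
by apply: intF_Kern => k kpq; exact: xlevel_in_chi (lvl_lt r kpq).
Qed.

End Design.

Theorem lemma1 (R : realType) (n p q : nat) (s : seq nat)
    (D : 'M[nat]_(n, p + q)) :
  (0 < n)%N -> Utype s D ->
  let y := @yvec R p q s n D in
  @QQD2 R p q s n D =
    - (\prod_(k < p) ((5 * sk s k + 1)%:R / (4 * sk s k)%:R)) * (4 / 3) ^+ q
    + n%:R ^- 2 * (y^T *m Amx R p s *m y) ord0 ord0.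
Proof.
move=> n_gt0 [size_s [D_lt _]] y.
have sk_gt0 k : (k < p + q)%N -> (0 < sk s k)%N.
  by move=> kpq; exact: leq_ltn_trans (D_lt (Ordinal n_gt0) (Ordinal kpq)).
have double_integral : intF p s (p + q) (fun t => intF p s (p + q) (Kern p q t))
    = \prod_(k < p + q) Kk_mean R p s k.
  rewrite (eq_intF (f' := fun=> \prod_(k < p + q) Kk_mean R p s k)) => [|t t_chi].
    by apply: intF_cst => k kpq _; exact: sk_gt0.
  exact: intF_Kern.
rewrite /QQD2 double_integral.
rewrite [X in 2 / _ * X](eq_bigr (fun=> \prod_(k < p + q) Kk_mean R p s k)) => [|r _];
  last exact: intF_Kern_xrow.
rewrite sumr_const card_ord /y (yvec_quad R size_s D_lt) prod_Kk_mean.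
have n_neq0 : n%:R != 0 :> R by rewrite pnatr_eq0 -lt0n.
by rewrite -mulr_natr; field.
Qed.
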